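(* Let $n$ be even, let $x_1,\dots,x_n\in\mathbb{R}^d$, let $\pi_k$ be a permutation of $[n]$ (vector $x_i$ is associated with datapoint $\pi_k(i)$), and let $S\subseteq[n]$ with $|S|=n/2$. Form $\pi_{k+1}$ by thinned reordering: starting from empty lists $\mathrm{front}$ and $\mathrm{back}$, for $i=1,\dots,n$ append $\pi_k(i)$ to $\mathrm{front}$ if $i\in S$ and otherwise prepend $\pi_k(i)$ to $\mathrm{back}$; set $\pi_{k+1}=\mathrm{concatenate}(\mathrm{front},\mathrm{back})$. Let $y_1,\dots,y_n$ be the vectors listed in the new order, i.e. $y_j=x_i$ where $\pi_k(i)=\pi_{k+1}(j)$. With $\eta_i:=2\cdot\mathbf{1}\{i\in S\}-1$, $$\max_{j\in[n]}\Big\|\sum_{l=1}^jy_l\Big\|_2\le\frac12\max_{j\in[n]}\Big\|\sum_{i=1}^jx_i\Big\|_2+\frac12\max_{j\in[n]}\Big\|\sum_{i=1}^j\eta_ix_i\Big\|_2+\Big\|\sum_{i=1}^nx_i\Big\|_2.$$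
   Context: In the paper, $x_i=x_i^k$ are the stochastic gradients of epoch $k$ and $S$ is the set of indices kept by a thinning algorithm returning $n/2$ of the $n$ vectors. *)

From HB Require Import structures.
From mathcomp Require Import all_boot all_order all_fingroup all_algebra.
From mathcomp Require Import reals.
Set Implicit Arguments. Unset Strict Implicit. Unset Printing Implicit Defensive.
Import Order.TTheory GRing.Theory Num.Theory.
Local Open Scope ring_scope.

Definition norm2 (R : realType) (d : nat) (v : 'rV[R]_d) : R :=
  Num.sqrt (\sum_(i < d) (v ord0 i) ^+ 2).

(* max_{j in [n]} of a nonnegative quantity (0 for n = 0) *)
Definition maxj (R : realType) (n : nat) (f : 'I_n -> R) : R :=
  \big[Num.max/0]_(j < n) f j.

(* prefix sum  sum_{i=1}^{j} x_i  (0-based: indices i <= j) *)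
Definition psum (R : realType) (d n : nat) (x : 'I_n -> 'rV[R]_d) (j : 'I_n)
  : 'rV[R]_d := \sum_(i < n | (i <= j)%N) x i.

Definition reorder_step (n : nat) (pi : 'S_n) (S : {set 'I_n})
  (st : seq 'I_n * seq 'I_n) (i : 'I_n) : seq 'I_n * seq 'I_n :=
  if i \in S then (rcons st.1 (pi i), st.2) else (st.1, pi i :: st.2).

Definition thinned_reorder (n : nat) (pi : 'S_n) (S : {set 'I_n}) : seq 'I_n :=
  let st := foldl (reorder_step pi S) ([::], [::]) (enum 'I_n) in st.1 ++ st.2.

Definition reordered (R : realType) (d n : nat) (x : 'I_n -> 'rV[R]_d)
  (pi : 'S_n) (S : {set 'I_n}) (j : 'I_n) : 'rV[R]_d :=
  x ((pi^-1)%g (nth j (thinned_reorder pi S) j)).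

Definition eta_sign (R : realType) (n : nat) (S : {set 'I_n}) (i : 'I_n) : R :=
  2 * (i \in S)%:R - 1.

(* In the new order the indices in S come first, increasingly, followed by
   the other indices, decreasingly.  Hence the indices of a prefix of y ending
   with index a form either {i in S | i <= a} or the complement of
   {i notin S | i < a}.  As 1{i in S} = (1 + eta_i) / 2, the sum of x over
   {i in S | i <= a} is half the sum of the prefix sums of x and of eta x up to
   a, and likewise, with a minus sign, over {i notin S | i <= a}; the triangle
   inequality concludes. *)
From HB Require Import structures.
From mathcomp Require Import all_boot all_order all_fingroup all_algebra.
From mathcomp Require Import reals.
From mathcomp Require Import ring lra zify.
Import Order.TTheory GRing.Theory Num.Theory.
Set Implicit Arguments. Unset Strict Implicit.
Local Open Scope ring_scope.

Lemma lagrange_identity (R : comRingType) d (u v : 'I_d -> R) :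
  \sum_i \sum_j (u i * v j - u j * v i) ^+ 2 =
  2 * ((\sum_i u i ^+ 2) * (\sum_j v j ^+ 2) - (\sum_i u i * v i) ^+ 2).
Proof.
set A := \sum_i u i ^+ 2; set B := \sum_j v j ^+ 2; set C := \sum_i u i * v i.
have inner i : \sum_j (u i * v j - u j * v i) ^+ 2 =
    u i ^+ 2 * B + v i ^+ 2 * A - u i * v i * C *+ 2.
  rewrite /A /B /C !mulr_sumr -sumrMnl -big_split -sumrB /=.
  by apply: eq_bigr => j _; ring.
under eq_bigr do rewrite inner.
by rewrite sumrB big_split sumrMnl -!mulr_suml /= -/A -/B -/C; ring.
Qed.

Lemma cauchy_schwarz (R : realDomainType) d (u v : 'I_d -> R) :
  (\sum_i u i * v i) ^+ 2 <= (\sum_i u i ^+ 2) * (\sum_j v j ^+ 2).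
Proof.
have : 0 <= \sum_i \sum_j (u i * v j - u j * v i) ^+ 2.
  by do 2![apply: sumr_ge0 => ? _]; apply: sqr_ge0.
rewrite lagrange_identity; lra.
Qed.

Lemma minkowski (R : rcfType) d (u v : 'I_d -> R) :
  Num.sqrt (\sum_i (u i + v i) ^+ 2) <=
  Num.sqrt (\sum_i u i ^+ 2) + Num.sqrt (\sum_i v i ^+ 2).
Proof.
set A := \sum_i u i ^+ 2; set B := \sum_i v i ^+ 2; set C := \sum_i u i * v i.
have A_ge0 : 0 <= A by apply: sumr_ge0 => i _; apply: sqr_ge0.
have B_ge0 : 0 <= B by apply: sumr_ge0 => i _; apply: sqr_ge0.
have expand : \sum_i (u i + v i) ^+ 2 = A + B + 2 * C.
  rewrite /A /B /C -big_split big_distrr -big_split /=.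
  by apply: eq_bigr => i _; ring.
have C_le : C <= Num.sqrt A * Num.sqrt B.
  apply: le_trans (ler_norm C) _.
  rewrite -sqrtrM // -sqrtr_sqr ler_sqrt ?mulr_ge0 //.
  exact: cauchy_schwarz.
have := sqrtr_ge0 A; have := sqrtr_ge0 B => sB sA.
rewrite -[leRHS]ger0_norm ?addr_ge0 // -sqrtr_sqr ler_sqrt ?sqr_ge0 //.
rewrite expand sqrrD !sqr_sqrtr //; lra.
Qed.

Section EuclideanNorm.
Variables (R : realType) (d : nat).
Implicit Types (u v : 'rV[R]_d) (c : R).

Lemma norm2_ge0 v : 0 <= norm2 v.
Proof. exact: sqrtr_ge0. Qed.

Lemma norm2D u v : norm2 (u + v) <= norm2 u + norm2 v.
Proof. by rewrite /norm2; under eq_bigr do rewrite mxE; apply: minkowski. Qed.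

Lemma norm2Z c v : norm2 (c *: v) = `|c| * norm2 v.
Proof.
rewrite /norm2; under eq_bigr do rewrite mxE exprMn.
by rewrite -big_distrr sqrtrM ?sqr_ge0 // sqrtr_sqr.
Qed.

Lemma norm2N v : norm2 (- v) = norm2 v.
Proof. by rewrite -scaleN1r norm2Z normrN normr1 mul1r. Qed.

Lemma norm2_half_sum u v :
  norm2 (2^-1 *: u + 2^-1 *: v) <= 2^-1 * norm2 u + 2^-1 * norm2 v.
Proof.
apply: le_trans (norm2D _ _) _.
by rewrite !norm2Z ger0_norm ?invr_ge0.
Qed.

Lemma norm2_half_diff u v :
  norm2 (2^-1 *: u - 2^-1 *: v) <= 2^-1 * norm2 u + 2^-1 * norm2 v.
Proof. by rewrite -scalerN -[norm2 v]norm2N norm2_half_sum. Qed.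

End EuclideanNorm.

Section MaxIndex.
Variables (R : realType) (n : nat) (f : 'I_n -> R).

Lemma maxj_ge0 : (forall j, 0 <= f j) -> 0 <= maxj f.
Proof.
by move=> f_ge0; rewrite /maxj; elim/big_ind: _ => // a b; rewrite le_max => ->.
Qed.

Lemma le_maxj j : f j <= maxj f.
Proof. exact: le_bigmax. Qed.

Lemma maxj_le c : 0 <= c -> (forall j, f j <= c) -> maxj f <= c.
Proof. by move=> c_ge0 f_le; apply: bigmax_le => // j _. Qed.

End MaxIndex.

Lemma index_leq_sorted (T : eqType) (key : T -> nat) (s : seq T) :
  sorted (relpre key ltn) s ->
  {in s &, forall a b, (index a s <= index b s)%N = (key a <= key b)%N}.
Proof.
move=> s_sorted a b a_s b_s.
have ltn_key := sorted_ltn_index (relpre_trans ltn_trans) s_sorted.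
case: ltngtP => [lt_ab|lt_ba|eq_ab].
- by have /ltnW -> := ltn_key a b a_s b_s lt_ab.
- by have /ltn_geF -> := ltn_key b a b_s a_s lt_ba.
- by rewrite -(nth_index a a_s) eq_ab nth_index ?leqnn.
Qed.

Section ThinnedOrder.
Variables (n : nat) (S : {set 'I_n}).

Definition thinned_order : seq 'I_n :=
  [seq i <- enum 'I_n | i \in S] ++ rev [seq i <- enum 'I_n | i \notin S].

Lemma foldl_reorder_step (pi : 'S_n) front back s :
  foldl (reorder_step pi S) (front, back) s =
  (front ++ map pi [seq i <- s | i \in S],
   rev (map pi [seq i <- s | i \notin S]) ++ back).
Proof.
elim: s front back => [|i s IHs] front back /=; first by rewrite cats0.
rewrite /reorder_step; case: (i \in S) => /=; rewrite IHs ?rev_cons cat_rcons //.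
Qed.

Lemma thinned_reorderE (pi : 'S_n) : thinned_reorder pi S = map pi thinned_order.
Proof.
by rewrite /thinned_reorder foldl_reorder_step cats0 map_cat map_rev.
Qed.

Lemma perm_thinned_order : perm_eq thinned_order (enum 'I_n).
Proof.
rewrite perm_sym -(perm_filterC (mem S)) perm_cat2l perm_sym.
by rewrite perm_rev.
Qed.

Lemma size_thinned_order : size thinned_order = n.
Proof. by rewrite (perm_size perm_thinned_order) size_enum_ord. Qed.

Lemma uniq_thinned_order : uniq thinned_order.
Proof. by rewrite (perm_uniq perm_thinned_order) enum_uniq. Qed.

Lemma mem_thinned_order i : i \in thinned_order.
Proof. by rewrite (perm_mem perm_thinned_order) mem_enum. Qed.

Definition thinned_key (i : 'I_n) : nat :=
  if i \in S then (i : nat) else (2 * n - i)%N.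

Lemma sorted_thinned_order : sorted (relpre thinned_key ltn) thinned_order.
Proof.
have key_trans : transitive (relpre thinned_key ltn) := relpre_trans ltn_trans.
have enum_sorted P : sorted (relpre val ltn) [seq i <- enum 'I_n | P i].
  apply: sorted_filter; first exact: relpre_trans ltn_trans.
  by rewrite -sorted_map val_enum_ord iota_ltn_sorted.
rewrite sorted_pairwise // pairwise_cat -!sorted_pairwise // rev_sorted.
apply/and3P; split.
- apply/allrelP => i j; rewrite mem_rev !mem_filter => /andP[iS _] /andP[jS _].
  rewrite /= /thinned_key iS (negbTE jS); have := ltn_ord i; have := ltn_ord j.
  lia.
- apply: (@sub_in_sorted _ (mem S) (relpre val ltn)).
  + by move=> i j iS jS; rewrite /= /thinned_key iS jS.
  + exact: filter_all.
  + exact: enum_sorted.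
- apply: (@sub_in_sorted _ (predC (mem S)) (relpre val ltn)).
  + move=> i j; rewrite !inE /= /thinned_key => /negbTE -> /negbTE ->.
    have := ltn_ord i; have := ltn_ord j; lia.
  + exact: filter_all.
  + exact: enum_sorted.
Qed.

Lemma index_thinned_order_leq i j :
  (index i thinned_order <= index j thinned_order)%N =
  (thinned_key i <= thinned_key j)%N.
Proof.
by apply: index_leq_sorted; rewrite ?sorted_thinned_order ?mem_thinned_order.
Qed.

End ThinnedOrder.

Section ThinnedPrefixSums.
Variables (R : realType) (d n : nat) (x : 'I_n -> 'rV[R]_d) (S : {set 'I_n}).

Local Notation eta_x := (fun i => eta_sign R S i *: x i).
Local Notation half_max_bound :=
  (2^-1 * maxj (fun j => norm2 (psum x j))
   + 2^-1 * maxj (fun j => norm2 (psum eta_x j))).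

Lemma psum_reordered (pi : 'S_n) (j : 'I_n) :
  psum (reordered x pi S) j =
  \sum_(i | (thinned_key S i <= thinned_key S (nth j (thinned_order S) j))%N)
    x i.
Proof.
set L := thinned_order S.
have index_lt i : (index i L < n)%N.
  rewrite -[n in (_ < n)%N](size_thinned_order S).
  by rewrite index_mem mem_thinned_order.
pose pos i := Ordinal (index_lt i).
have pos_bij : bijective pos.
  exists (fun l => nth l L l) => [i|l].
    by rewrite nth_index ?mem_thinned_order.
  by apply: val_inj; rewrite /= index_uniq ?size_thinned_order ?uniq_thinned_order.
rewrite /psum (reindex pos) /=; last exact: onW_bij.
have jE : j = index (nth j L j) L :> nat.
  by rewrite index_uniq ?size_thinned_order ?uniq_thinned_order.
apply: eq_big => [i|i _].
  by rewrite [in X in (_ <= X)%N]jE index_thinned_order_leq.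
rewrite /reordered thinned_reorderE (nth_map i) ?size_thinned_order //.
by rewrite permK nth_index ?mem_thinned_order.
Qed.

Lemma sum_thinned_key_leq (a : 'I_n) :
  \sum_(i | (thinned_key S i <= thinned_key S a)%N) x i =
  if a \in S then \sum_(i | (i \in S) && (i <= a)%N) x i
  else \sum_i x i - \sum_(i | (i \notin S) && (i < a)%N) x i.
Proof.
rewrite /thinned_key; case: ifP => aS.
  apply: eq_bigl => i; case: (i \in S) => //=.
  by have := ltn_ord i; have := ltn_ord a; lia.
rewrite [\sum_i x i](bigID (fun i => (i \notin S) && (i < a)%N)) /=.
rewrite addrAC subrr add0r.
apply: eq_bigl => i; case: (i \in S) => /=;
  by have := ltn_ord i; have := ltn_ord a; lia.
Qed.

Lemma sum_in_S_leq (a : 'I_n) :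
  \sum_(i | (i \in S) && (i <= a)%N) x i =
  2^-1 *: psum x a + 2^-1 *: psum eta_x a.
Proof.
have coefE (b : bool) : 2^-1 + 2^-1 * (2 * b%:R - 1) = b%:R :> R.
  by case: b; lra.
rewrite /psum !scaler_sumr -big_split big_mkcondl /=.
apply: eq_bigr => i _; rewrite scalerA -scalerDl coefE.
by case: (i \in S); rewrite ?scale1r ?scale0r.
Qed.

Lemma sum_notin_S_leq (a : 'I_n) :
  \sum_(i | (i \notin S) && (i <= a)%N) x i =
  2^-1 *: psum x a - 2^-1 *: psum eta_x a.
Proof.
have psum_split : psum x a = \sum_(i | (i \in S) && (i <= a)%N) x i
                             + \sum_(i | (i \notin S) && (i <= a)%N) x i.
  rewrite /psum (bigID (mem S)) /=.
  by congr (_ + _); apply: eq_bigl => i; rewrite andbC.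
apply: (addrI (2^-1 *: psum x a + 2^-1 *: psum eta_x a)).
rewrite -sum_in_S_leq -psum_split sum_in_S_leq addrACA subrr addr0 -scalerDl.
by rewrite (_ : 2^-1 + 2^-1 = 1 :> R) ?scale1r //; lra.
Qed.

Lemma half_max_bound_ge0 : 0 <= half_max_bound.
Proof.
by rewrite addr_ge0 // mulr_ge0 ?invr_ge0 // maxj_ge0 // => j; apply: norm2_ge0.
Qed.

Lemma norm2_sum_in_S_leq (a : 'I_n) :
  norm2 (\sum_(i | (i \in S) && (i <= a)%N) x i) <= half_max_bound.
Proof.
rewrite sum_in_S_leq; apply: le_trans (norm2_half_sum _ _) _.
by rewrite lerD // ler_wpM2l ?invr_ge0 // le_maxj.
Qed.

Lemma norm2_sum_notin_S_ltn (a : 'I_n) :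
  norm2 (\sum_(i | (i \notin S) && (i < a)%N) x i) <= half_max_bound.
Proof.
have [a0|a_gt0] := posnP a.
  rewrite big_pred0 => [|i]; last by rewrite a0 ltn0 andbF.
  by rewrite -(scale0r 0) norm2Z normr0 mul0r half_max_bound_ge0.
have a1_lt : (a.-1 < n)%N by have := ltn_ord a; lia.
rewrite (eq_bigl (fun i => (i \notin S) && (i <= Ordinal a1_lt)%N)) => [|i].
  rewrite sum_notin_S_leq; apply: le_trans (norm2_half_diff _ _) _.
  by rewrite lerD // ler_wpM2l ?invr_ge0 // le_maxj.
by rewrite /=; lia.
Qed.

End ThinnedPrefixSums.

Theorem lemmaG1 (R : realType) (d n : nat) (x : 'I_n -> 'rV[R]_d)
  (pi : 'S_n) (S : {set 'I_n}) :
  ~~ odd n -> #|S| = n./2 ->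
  maxj (fun j => norm2 (psum (reordered x pi S) j))
  <= 2^-1 * maxj (fun j => norm2 (psum x j))
   + 2^-1 * maxj (fun j => norm2 (psum (fun i => eta_sign R S i *: x i) j))
   + norm2 (\sum_(i < n) x i).
Proof.
move=> _ _.
apply: maxj_le => [|j]; first by rewrite addr_ge0 ?half_max_bound_ge0 ?norm2_ge0.
rewrite psum_reordered sum_thinned_key_leq; case: ifP => _.
  by apply: le_trans (norm2_sum_in_S_leq _ _ _) _; rewrite lerDl norm2_ge0.
apply: le_trans (norm2D _ _) _.
by rewrite norm2N addrC lerD2r norm2_sum_notin_S_ltn.
Qed.
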